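(* Let $n\in\mathbb N$, let $\sigma$ be a cyclic permutation of $(1,2,3,4)$ (i.e. a power of the $4$-cycle $(1\,2\,3\,4)$), and let $M=\frac{n}{2n-1}\sum_{i=1}^4\mathfrak P^{(n)}_i\otimes\mathfrak P^{(n)}_{\sigma(i)}$ acting on $\mathbb C^n\otimes\mathbb C^n$. (i) If $\sigma=\mathrm{id}$, then the largest eigenvalue of $M$ is $1$, and the corresponding eigenspace is $\mathbb C|\phi_n\rangle$. (ii) If $\sigma\neq\mathrm{id}$, then all eigenvalues of $M$ are strictly smaller than $1$.
   Context: $|\phi_n\rangle=\frac1{\sqrt n}\sum_{i=1}^n|i\rangle|i\rangle\in\mathbb C^n\otimes\mathbb C^n$ is the maximally entangled state. For $n\in\mathbb N$, $\mathfrak P^{(n)}_1,\dots,\mathfrak P^{(n)}_4\in M_n(\mathbb R)$ denote orthogonal projections (real symmetric idempotent matrices) such that (i) $\mathfrak P^{(n)}_1+\dots+\mathfrak P^{(n)}_4=(2-\frac1n)I_n$; (ii) $\operatorname{rk}\mathfrak P^{(n)}_1=\lfloor\frac n2\rfloor-(-1)^n$ and $\operatorname{rk}\mathfrak P^{(n)}_i=\lfloor\frac n2\rfloor$ for $i=2,3,4$; (iii) the only subspaces of $\mathbb C^n$ invariant under all four matrices are $0$ and $\mathbb C^n$. Such quadruples exist for every $n$, and any two of them are simultaneously unitarily equivalent; moreover, any quadruple of orthogonal projections on a Hilbert space summing to $(2-\frac1n)I$ with no nontrivial common invariant closed subspace is unitarily equivalent to one of the four cyclic shifts $(\mathfrak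 P^{(n)}_{\sigma(1)},\dots,\mathfrak P^{(n)}_{\sigma(4)})$, $\sigma$ a power of the cycle $(1\,2\,3\,4)$, and these four are pairwise inequivalent. *)

From mathcomp Require Import all_boot all_order all_algebra.
From mathcomp Require Import complex mxtens.
From mathcomp Require Import reals.
Set Implicit Arguments. Unset Strict Implicit. Unset Printing Implicit Defensive.
Import Order.TTheory GRing.Theory Num.Theory.
Local Open Scope ring_scope.

Definition cmx (R : realType) (m p : nat) (A : 'M[R]_(m, p)) : 'M[R[i]]_(m, p) :=
  map_mx (fun x : R => (x%:C)%C) A.

Definition orth_proj (R : realType) (n : nat) (P : 'M[R]_n) : Prop :=
  P^T = P /\ P *m P = P.

(* A subspace S of C^n (column vectors) is represented by a matrix U whose
   (transposed) rows span S; A S ⊆ S  iff  (U *m A^T <= U)%MS. *)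
Definition only_trivial_invariant_subspaces (C : fieldType) (I : Type) (n : nat)
  (A : I -> 'M[C]_n) : Prop :=
  forall U : 'M[C]_n, (forall i, (U *m (A i)^T <= U)%MS) ->
    (U == (0 : 'M[C]_n))%MS \/ row_full U.

(* The cyclic permutation i |-> i + k (mod 4) of {1,2,3,4} ~ 'I_4; these are
   exactly the powers (1 2 3 4)^k. *)
Definition cyc (k : 'I_4) (i : 'I_4) : 'I_4 := inZp (i + k).

Definition is_eigenvalue (C : fieldType) (m : nat) (M : 'M[C]_m) (l : C) : Prop :=
  exists v : 'cV[C]_m, v != 0 /\ M *m v = l *: v.

(* Maximally entangled state |phi_n> = n^{-1/2} sum_i |i>|i> in C^n (x) C^n,
   with |i>|j> the basis vector of index mxtens_index (i, j) = i*n + j. *)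
Definition phi (R : realType) (n : nat) : 'cV[R[i]]_(n * n) :=
  (sqrtC (n%:R : R[i]))^-1 *: \sum_(j < n) delta_mx (mxtens_index (j, j)) ord0.

From mathcomp Require Import all_boot all_order all_algebra.
From mathcomp Require Import complex mxtens.
From mathcomp Require Import reals.
From mathcomp Require Import ring zify.
Import Order.TTheory GRing.Theory Num.Theory.
Set Implicit Arguments. Unset Strict Implicit. Unset Printing Implicit Defensive.
Local Open Scope ring_scope.

(* Identify C^n (x) C^n with the matrices M_n(C) through X |-> vec X; then
   (A (x) B) vec X = vec (A X B^T), so the eigenvalue equation M v = l v
   becomes s sum_i A_i X B_i = l X with s = n/(2n-1), e = 2 - 1/n, s e = 1.
   For Hermitian projections with sum_i A_i = sum_i B_i = e, the
   Hilbert-Schmidt norms of the "defects" A_i X (1 - B_i) and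
   (1 - A_i) X B_i add up to 2 (e |X|^2 - <X, sum_i A_i X B_i>) =
   2 (1 - l) |X|^2 / s, which gives l <= 1, with equality only if
   A_i X = X B_i for every i.
   An intertwiner of the irreducible family P_i is then invertible by a
   Schur-type argument.  For sigma = (1 2 3 4)^k with k <> 0 this would give
   rank P_1 = rank P_(1+k), contradicting the rank hypotheses; for
   sigma = id it forces X to commute with every P_i, hence to be scalar,
   i.e. v to be proportional to |phi_n> = vec(1)/sqrt n, which is indeed
   fixed by M. *)

Section Vectorization.
Variables (C : comPzRingType) (n : nat).

Definition vecm (X : 'M[C]_n) : 'cV[C]_(n * n) :=
  \col_k X (mxtens_unindex k).1 (mxtens_unindex k).2.

Definition unvec (v : 'cV[C]_(n * n)) : 'M[C]_n :=
  \matrix_(a, b) v (mxtens_index (a, b)) ord0.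

Lemma vecmE X a b j : vecm X (mxtens_index (a, b)) j = X a b.
Proof. by rewrite mxE mxtens_indexK. Qed.

Lemma unvecK : cancel unvec vecm.
Proof.
move=> v; apply/matrixP => k j; case: (mxtens_indexP k) => a b.
by rewrite vecmE mxE (ord1 j).
Qed.

Lemma vecmK : cancel vecm unvec.
Proof. by move=> X; apply/matrixP => a b; rewrite mxE vecmE. Qed.

Lemma vecm_inj : injective vecm.
Proof. exact: can_inj vecmK. Qed.

Lemma vecm_eq0 X : (vecm X == 0) = (X == 0).
Proof.
apply/eqP/eqP => [X0|->]; last by apply/matrixP => k j; rewrite !mxE.
by apply/matrixP => a b; rewrite -(vecmE X a b ord0) X0 !mxE.
Qed.

Lemma vecm_sum (I : finType) (F : I -> 'M[C]_n) :
  vecm (\sum_i F i) = \sum_i vecm (F i).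
Proof.
apply/matrixP => k j; rewrite !mxE !summxE; apply: eq_bigr => i _.
by rewrite mxE.
Qed.

Lemma vecmZ c X : vecm (c *: X) = c *: vecm X.
Proof. by apply/matrixP => k j; rewrite !mxE. Qed.

Lemma tensmx_vecm (A B X : 'M[C]_n) :
  tensmx A B *m vecm X = vecm (A *m X *m B^T).
Proof.
apply/matrixP => k j; case: (mxtens_indexP k) => a b.
rewrite vecmE !mxE (reindex (@mxtens_index n n)) /=; last first.
  exact/onW_bij/(Bijective (@mxtens_indexK n n) (@mxtens_unindexK n n)).
rewrite (eq_bigr (fun p : 'I_n * 'I_n => A a p.1 * B b p.2 * X p.1 p.2)); last first.
  by move=> [c d] _; rewrite tensmxE vecmE.
rewrite -(pair_bigA _ (fun c d => A a c * B b d * X c d)) /= exchange_big /=.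
apply: eq_bigr => d _; rewrite !mxE mulr_suml; apply: eq_bigr => c _.
ring.
Qed.

Lemma vecm1 :
  vecm 1%:M = \sum_(j < n) delta_mx (mxtens_index (j, j)) (ord0 : 'I_1).
Proof.
apply/matrixP => kk jj; case: (mxtens_indexP kk) => a b.
rewrite vecmE summxE (ord1 jj) !mxE.
under eq_bigr => j _ do
  rewrite mxE (inj_eq (can_inj (@mxtens_indexK n n))) xpair_eqE eqxx andbT.
rewrite (bigD1 a) //= eqxx big1 ?addr0; first by rewrite eq_sym.
by move=> j; rewrite eq_sym => /negbTE ->.
Qed.

End Vectorization.

Section HilbertSchmidt.
Variables (C : numClosedFieldType) (n : nat).
Implicit Types (X Y Z A B P Q : 'M[C]_n).

Definition hs X Y : C := \sum_a \sum_b (X a b)^* * Y a b.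

Lemma hsBr X Y Z : hs X (Y - Z) = hs X Y - hs X Z.
Proof.
rewrite /hs -sumrB; apply: eq_bigr => a _; rewrite -sumrB.
by apply: eq_bigr => b _; rewrite !mxE mulrBr.
Qed.

Lemma hsZr X c Y : hs X (c *: Y) = c * hs X Y.
Proof.
rewrite /hs mulr_sumr; apply: eq_bigr => a _; rewrite mulr_sumr.
by apply: eq_bigr => b _; rewrite mxE mulrCA.
Qed.

Lemma hs_sumr X (I : finType) (F : I -> 'M[C]_n) :
  hs X (\sum_i F i) = \sum_i hs X (F i).
Proof.
rewrite /hs [RHS]exchange_big; apply: eq_bigr => a _ /=.
rewrite [RHS]exchange_big; apply: eq_bigr => b _ /=.
by rewrite summxE mulr_sumr.
Qed.

Lemma hs_tr X Y : hs X Y = hs X^T Y^T.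
Proof.
rewrite /hs exchange_big; apply: eq_bigr => b _; apply: eq_bigr => a _.
by rewrite !mxE.
Qed.

Lemma hs_ge0 X : 0 <= hs X X.
Proof.
by apply: sumr_ge0 => a _; apply: sumr_ge0 => b _; rewrite mulrC mul_conjC_ge0.
Qed.

Lemma hs_eq0 X : hs X X = 0 -> X = 0.
Proof.
have term_ge0 (x : C) : 0 <= x^* * x by rewrite mulrC mul_conjC_ge0.
move=> X0; apply/matrixP => a b; rewrite mxE; apply/eqP.
rewrite -mul_conjC_eq0 mulrC; apply/eqP.
have row0 : \sum_b (X a b)^* * X a b = 0.
  by apply: (psumr_eq0P _ X0) => // a' _; apply: sumr_ge0.
exact: (psumr_eq0P _ row0).
Qed.

Definition hermitian A : Prop := forall a b, (A a b)^* = A b a.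

Definition hproj A : Prop := hermitian A /\ A *m A = A.

Lemma hermitian_tr A : hermitian A -> hermitian A^T.
Proof. by move=> hA a b; rewrite !mxE hA. Qed.

Lemma hs_adjl A X Y : hermitian A -> hs X (A *m Y) = hs (A *m X) Y.
Proof.
move=> hA; rewrite /hs.
under eq_bigr => a _ do under eq_bigr => b _ do rewrite mxE mulr_sumr.
under [RHS]eq_bigr => c _ do under eq_bigr => b _ do
  rewrite mxE rmorph_sum mulr_suml.
rewrite [RHS]exchange_big /= [LHS]exchange_big /=; apply: eq_bigr => b _.
rewrite exchange_big; apply: eq_bigr => a _; apply: eq_bigr => c _.
by rewrite rmorphM /= hA mulrCA mulrA.
Qed.

Lemma hs_adjr B X Y : hermitian B -> hs X (Y *m B) = hs (X *m B) Y.
Proof.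
move=> hB; rewrite hs_tr trmx_mul hs_adjl; last exact: hermitian_tr.
by rewrite [RHS]hs_tr trmx_mul.
Qed.

Lemma hproj1B A : hproj A -> hproj (1%:M - A).
Proof.
case=> hA AA; split; last first.
  by rewrite mulmxBl mul1mx mulmxBr mulmx1 AA subrr subr0.
by move=> a b; rewrite !mxE rmorphB /= rmorph_nat hA eq_sym.
Qed.

Lemma hs_sandwich P Q X : hproj P -> hproj Q ->
  hs (P *m X *m Q) (P *m X *m Q) = hs X (P *m X *m Q).
Proof.
case=> hP PP [hQ QQ].
have PXQ_l : P *m X *m Q = P *m (P *m X *m Q) by rewrite !mulmxA PP.
have PXQ_r : P *m X *m Q = P *m X *m Q *m Q by rewrite -[RHS]mulmxA QQ.
by symmetry; rewrite [in LHS]PXQ_l hs_adjl // [in LHS]PXQ_r hs_adjr.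
Qed.

(* How far X is from intertwining P and Q: zero iff P X = X Q. *)
Definition defect P Q X : C :=
  hs (P *m X *m (1%:M - Q)) (P *m X *m (1%:M - Q)) +
  hs ((1%:M - P) *m X *m Q) ((1%:M - P) *m X *m Q).

Lemma defect_ge0 P Q X : 0 <= defect P Q X.
Proof. by rewrite addr_ge0 ?hs_ge0. Qed.

(* The defect only involves the three inner products <X, PX>, <X, XQ>
   and <X, PXQ>; summing it over i is what relates it to the eigenvalue. *)
Lemma defectE P Q X : hproj P -> hproj Q ->
  defect P Q X = hs X (P *m X) + hs X (X *m Q) - 2 * hs X (P *m X *m Q).
Proof.
move=> hP hQ; rewrite /defect !hs_sandwich //; try exact: hproj1B.
rewrite mulmxBr mulmx1 !mulmxBl mul1mx !hsBr.
ring.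
Qed.

Lemma defect_eq0 P Q X : defect P Q X = 0 -> P *m X = X *m Q.
Proof.
move/eqP; rewrite paddr_eq0 ?hs_ge0 // => /andP[/eqP/hs_eq0 h1 /eqP/hs_eq0 h2].
move/eqP: h1; rewrite mulmxBr mulmx1 subr_eq0 => /eqP ->.
by move/eqP: h2; rewrite !mulmxBl mul1mx subr_eq0 => /eqP ->.
Qed.

Lemma sandwich_eigen_le1 (I : finType) (A B : I -> 'M[C]_n) (e s l : C) X :
  (forall i, hproj (A i)) -> (forall i, hproj (B i)) ->
  \sum_i A i = e%:M -> \sum_i B i = e%:M -> s * e = 1 -> 0 < s -> X != 0 ->
  s *: \sum_i (A i *m X *m B i) = l *: X ->
  l <= 1 /\ (l = 1 -> forall i, A i *m X = X *m B i).
Proof.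
move=> hA hB sumA sumB se s_gt0 X0 eigX.
have nX_gt0 : 0 < hs X X.
  by rewrite lt_def hs_ge0 andbT; apply: contra_neq X0 => /hs_eq0.
set S := \sum_i hs X (A i *m X *m B i).
have eigS : s * S = l * hs X X.
  by have := congr1 (hs X) eigX; rewrite !hsZr hs_sumr.
have defect_sum : \sum_i defect (A i) (B i) X = 2 * (e * hs X X - S).
  under eq_bigr => i _ do rewrite defectE //.
  rewrite sumrB big_split -mulr_sumr -/S -!hs_sumr -mulmx_suml -mulmx_sumr.
  by rewrite sumA sumB mul_scalar_mx mul_mx_scalar hsZr /=; ring.
have defect_sumE : s * \sum_i defect (A i) (B i) X = 2 * ((1 - l) * hs X X).
  rewrite defect_sum; transitivity (2 * (s * e * hs X X - s * S)); first by ring.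
  by rewrite se eigS; ring.
have sum_ge0 : 0 <= \sum_i defect (A i) (B i) X.
  by apply: sumr_ge0 => i _; apply: defect_ge0.
split.
  rewrite -subr_ge0 -(pmulr_lge0 _ nX_gt0) -(pmulr_rge0 _ (ltr0n C 2)).
  by rewrite -defect_sumE mulr_ge0 // ltW.
move=> l1 i; apply: defect_eq0.
have sum0 : \sum_i defect (A i) (B i) X = 0.
  have /eqP : s * \sum_i defect (A i) (B i) X = 0.
    by rewrite defect_sumE l1 subrr !mul0r mulr0.
  by rewrite mulf_eq0 (gt_eqF s_gt0) => /eqP.
by apply: (psumr_eq0P _ sum0) => // j _; apply: defect_ge0.
Qed.

End HilbertSchmidt.

(* Schur-type lemma: the left kernel of a matrix intertwining an irreducible
   family of symmetric matrices with anything is invariant, so the matrix is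
   zero or invertible. *)
Lemma irreducible_intertwiner (C : fieldType) (I : Type) (n : nat)
    (A : I -> 'M[C]_n) (X : 'M[C]_n) :
  only_trivial_invariant_subspaces A -> (forall j, (A j)^T = A j) ->
  (forall j, exists B, A j *m X = X *m B) -> X = 0 \/ row_free X.
Proof.
move=> irrA symA intertw; case: (irrA (kermx X)).
- move=> j; rewrite symA; apply/sub_kermxP; have [B AX] := intertw j.
  by rewrite -mulmxA AX mulmxA mulmx_ker mul0mx.
- by move/eqmx0P => ker0; right; rewrite -kermx_eq0 ker0.
- by rewrite -sub1mx => /sub_kermxP; rewrite mul1mx; left.
Qed.

Lemma irreducible_commutant (C : closedFieldType) (I : Type) (n : nat)
    (A : I -> 'M[C]_n) (X : 'M[C]_n) :
  (0 < n)%N -> only_trivial_invariant_subspaces A ->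
  (forall j, (A j)^T = A j) -> (forall j, A j *m X = X *m A j) ->
  exists lam, X = lam%:M.
Proof.
move=> n_gt0 irrA symA commX.
have [lam] : exists lam, root (char_poly X) lam.
  by apply/closed_rootP; rewrite size_char_poly eqSS -lt0n.
rewrite -eigenvalue_root_char => eig_lam; exists lam.
have comm_shift j : A j *m (X - lam%:M) = (X - lam%:M) *m A j.
  by rewrite mulmxBr mulmxBl commX scalar_mxC.
have [/eqP|free] :=
  irreducible_intertwiner irrA symA (fun j => ex_intro _ _ (comm_shift j)).
  by rewrite subr_eq0 => /eqP.
by move: eig_lam; rewrite /eigenvalue /eigenspace kermx_eq0 free.
Qed.

Lemma rank_intertwined (C : fieldType) (n : nat) (A B X : 'M[C]_n) :
  row_free X -> A *m X = X *m B -> \rank A = \rank B.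
Proof.
move=> freeX AX; rewrite -(mxrankMfree A freeX) AX -mxrank_tr trmx_mul.
rewrite mxrankMfree ?mxrank_tr //.
by rewrite row_free_unit unitmx_tr -row_free_unit.
Qed.

Lemma cycE (k i : 'I_4) : cyc k i = i + k.
Proof. exact: val_inj. Qed.

Lemma cyc_inj (k : 'I_4) : injective (cyc k).
Proof. by move=> i j; rewrite !cycE => /addIr. Qed.

Lemma cyc0 (i : 'I_4) : cyc ord0 i = i.
Proof. by rewrite cycE addr0. Qed.

Lemma cyc_ord0 (k : 'I_4) : cyc k ord0 = k.
Proof. by rewrite cycE add0r. Qed.

Section Complexification.
Variables (R : realType) (n : nat).

Lemma cmx_sym (P : 'M[R]_n) : orth_proj P -> (cmx P)^T = cmx P.
Proof. by case=> symP _; rewrite /cmx map_trmx symP. Qed.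

Lemma cmx_hproj (P : 'M[R]_n) : orth_proj P -> hproj (cmx P).
Proof.
move=> hP; split; last by case: hP => _ PP; rewrite /cmx -map_mxM PP.
move=> a b; rewrite -[in RHS](cmx_sym hP) !mxE.
exact: conjc_real.
Qed.

Lemma cmx_sum (I : finType) (F : I -> 'M[R]_n) :
  cmx (\sum_i F i) = \sum_i cmx (F i).
Proof. exact: map_mx_sum. Qed.

Lemma cmx_scalar (x : R) : cmx (x *: 1%:M : 'M[R]_n) = (x%:C)%C%:M.
Proof. by rewrite /cmx scalemx1 map_scalar_mx. Qed.

End Complexification.

Section TheOperator.
Variables (R : realType) (n : nat) (P : 'I_4 -> 'M[R]_n) (k : 'I_4).
Hypothesis n_gt0 : (0 < n)%N.
Hypothesis P_proj : forall i, orth_proj (P i).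
Hypothesis P_sum : \sum_(i < 4) P i = (2 - (n%:R)^-1) *: 1%:M.
Hypothesis P_irr : only_trivial_invariant_subspaces (fun i => cmx (P i)).
Local Notation C := R[i].
Local Notation A i := (cmx (P i)).
Local Notation e := (2 - (n%:R : C)^-1).
Local Notation s := ((n%:R : C) / (2 * n%:R - 1)).
Local Notation M := (s *: \sum_(i < 4) tensmx (A i) (A (cyc k i))).

Lemma sum_A : \sum_i A i = e%:M.
Proof.
rewrite -cmx_sum P_sum cmx_scalar rmorphB /= fmorphV /=.
by rewrite !rmorph_nat.
Qed.

Lemma sum_A_shifted : \sum_i A (cyc k i) = e%:M.
Proof. by rewrite -sum_A [RHS](reindex_inj (@cyc_inj k)). Qed.

Lemma denom_gt0 : 0 < 2 * n%:R - 1 :> C.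
Proof. by rewrite subr_gt0 -natrM ltr1n; lia. Qed.

Lemma s_e : s * e = 1.
Proof.
have n_neq0 : n%:R != 0 :> C by rewrite pnatr_eq0 -lt0n.
by field; rewrite n_neq0 lt0r_neq0 ?denom_gt0.
Qed.

Lemma s_gt0 : 0 < s.
Proof. by rewrite divr_gt0 ?denom_gt0 ?ltr0n. Qed.

(* M in matrix form (the A_i are symmetric, so A^T = A in tensmx_vecm). *)
Lemma M_vecm X : M *m vecm X = vecm (s *: \sum_i A i *m X *m A (cyc k i)).
Proof.
rewrite -scalemxAl mulmx_suml vecmZ vecm_sum; congr (_ *: _).
by apply: eq_bigr => i _; rewrite tensmx_vecm cmx_sym.
Qed.

Lemma M_eigen_le1 l v : v != 0 -> M *m v = l *: v ->
  l <= 1 /\ (l = 1 -> forall i, A i *m unvec v = unvec v *m A (cyc k i)).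
Proof.
move=> v0 eigv.
apply: (sandwich_eigen_le1 (A := fun i => A i) _ _ sum_A sum_A_shifted s_e s_gt0).
- by move=> i; apply: cmx_hproj.
- by move=> i; apply: cmx_hproj.
- by rewrite -vecm_eq0 unvecK.
- by apply: vecm_inj; rewrite -M_vecm vecmZ unvecK.
Qed.

(* For a nontrivial shift, P_1 and P_(1+k) have different ranks, so no
   invertible matrix can intertwine them; hence 1 is not an eigenvalue. *)
Lemma M_eigen_lt1_shifted l :
  (\rank (P ord0))%:Z = (n./2)%:Z - (-1) ^+ n ->
  (forall i : 'I_4, i != ord0 -> \rank (P i) = n./2) ->
  k != ord0 -> is_eigenvalue M l -> l < 1.
Proof.
move=> rank0 rank_i k0 [v [v0 eigv]]; have [le1 eq1] := M_eigen_le1 v0 eigv.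
rewrite lt_def le1 andbT; apply/negP => /eqP/esym/eq1 intertw.
have [X0|freeX] := irreducible_intertwiner P_irr (fun j => cmx_sym (P_proj j))
  (fun j => ex_intro _ _ (intertw j)).
  by move: v0; rewrite -(unvecK v) X0 vecm_eq0 eqxx.
have := rank_intertwined freeX (intertw ord0).
rewrite cyc_ord0 !mxrank_map (rank_i k k0) => rank_eq.
by move/eqP: rank0; rewrite rank_eq -subr_eq0 opprB addrC subrK signr_eq0.
Qed.

Lemma M_scalar (t : C) : k = ord0 -> M *m vecm t%:M = vecm t%:M.
Proof.
move=> k0; rewrite M_vecm k0; congr vecm.
have idem i : A i *m A i = A i by case: (cmx_hproj (P_proj i)).
under eq_bigr => i _ do rewrite cyc0 mul_mx_scalar -scalemxAl idem.
by rewrite -scaler_sumr sum_A !scale_scalar_mx mulrCA s_e mulr1.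
Qed.

Lemma phiE (c : C) : c *: phi R n = vecm (c / sqrtC n%:R)%:M.
Proof. by rewrite /phi -vecm1 -!vecmZ scalerA scalemx1. Qed.

Lemma sqrtn_neq0 : sqrtC (n%:R : C) != 0.
Proof. by rewrite sqrtC_eq0 pnatr_eq0 -lt0n. Qed.

Lemma phi_neq0 : phi R n != 0.
Proof.
rewrite -[phi R n]scale1r phiE vecm_eq0 mul1r; apply/eqP.
move/matrixP/(_ (Ordinal n_gt0) (Ordinal n_gt0)); rewrite !mxE eqxx mulr1n.
by apply/eqP; rewrite invr_eq0 sqrtn_neq0.
Qed.

(* For sigma = id the eigenvectors for 1 are exactly the multiples of phi:
   their matricization commutes with every P_i, hence is scalar. *)
Lemma M_fixed_iff v :
  k = ord0 -> (M *m v = v <-> exists c : C, v = c *: phi R n).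
Proof.
move=> k0; split=> [fixv | [c ->]]; last by rewrite phiE M_scalar.
have [->|v0] := eqVneq v 0; first by exists 0; rewrite scale0r.
have [_ /(_ erefl)] := M_eigen_le1 v0 (etrans fixv (esym (scale1r v))).
rewrite k0 => intertw.
have commX i : A i *m unvec v = unvec v *m A i by have := intertw i; rewrite cyc0.
have [lam Xlam] := irreducible_commutant n_gt0 P_irr
  (fun j => cmx_sym (P_proj j)) commX.
by exists (lam * sqrtC n%:R); rewrite phiE mulfK ?sqrtn_neq0 // -Xlam unvecK.
Qed.

End TheOperator.

Theorem lemma4p1 (R : realType) (n : nat) (P : 'I_4 -> 'M[R]_n) (k : 'I_4) :
  (0 < n)%N ->
  (forall i, orth_proj (P i)) ->
  \sum_(i < 4) P i = (2 - (n%:R)^-1) *: 1%:M ->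
  (\rank (P ord0))%:Z = (n./2)%:Z - (-1) ^+ n ->
  (forall i : 'I_4, i != ord0 -> \rank (P i) = n./2) ->
  only_trivial_invariant_subspaces (fun i => cmx (P i)) ->
  let M : 'M[R[i]]_(n * n) :=
    ((n%:R : R[i]) / (2 * n%:R - 1)) *: \sum_(i < 4) tensmx (cmx (P i)) (cmx (P (cyc k i))) in
  (k = ord0 ->
     is_eigenvalue M 1 /\
     (forall l, is_eigenvalue M l -> l <= 1) /\
     (forall v : 'cV[R[i]]_(n * n), M *m v = v <-> exists c : R[i], v = c *: phi R n)) /\
  (k != ord0 -> forall l, is_eigenvalue M l -> l < 1).
Proof.
move=> n_gt0 P_proj P_sum rank0 rank_i P_irr M.
have fixed_iff := M_fixed_iff (k := k) n_gt0 P_proj P_sum P_irr.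
split=> [k0|k_neq0 l]; last first.
  exact: (M_eigen_lt1_shifted n_gt0 P_proj P_sum P_irr rank0 rank_i k_neq0).
split.
  exists (phi R n); split; first exact: (phi_neq0 R n_gt0).
  by rewrite scale1r; apply/(fixed_iff _ k0); exists 1; rewrite scale1r.
split=> [l [v [v0 eigv]]|v]; last exact: (fixed_iff v k0).
by case: (M_eigen_le1 n_gt0 P_proj P_sum v0 eigv).
Qed.
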